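(* Let $s\ge1$, let $E_1,\ldots,E_s,F_1,\ldots,F_s$ be real numbers, and let $Z_j=\{F_j,\,E_j+F_j+1\}$ for $j=1,\ldots,s$. Suppose that for every $r=1,2,\ldots,s$, $$E_r+F_r+1+\max\big(Z_{r+1}+Z_{r+2}+\cdots+Z_s\big)<0.$$ Then the multiple series $$\sum_{k_1,\ldots,k_s\ge0}\ \prod_{j=1}^{s}(k_j+1)^{E_j}\,(k_1+\cdots+k_j+1)^{F_j}$$ converges.
   Context: For sets $S,T$ of reals, $S+T=\{x+y: x\in S,\ y\in T\}$ is the sum-set; for $r=s$ the sum-set $Z_{r+1}+\cdots+Z_s$ is empty of summands and is interpreted as $\{0\}$, so the condition reads $E_s+F_s+1<0$. *)

From HB Require Import structures.
From mathcomp Require Import all_boot all_order all_algebra.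
From mathcomp Require Import all_classical all_reals all_analysis.
Set Implicit Arguments. Unset Strict Implicit. Unset Printing Implicit Defensive.
Import Order.TTheory GRing.Theory Num.Theory.
Local Open Scope ring_scope.

Section Defs.
Variables (R : realType) (s : nat).

Definition Zset (E F : 'I_s -> R) (j : 'I_s) : seq R := [:: F j; E j + F j + 1].

Definition sumset (S T : seq R) : seq R := [seq x + y | x <- S, y <- T].

(* Z_{r+1} + ... + Z_s  (0-based: all j with r < j); the empty sum is {0} *)
Definition Zsum (E F : 'I_s -> R) (r : 'I_s) : seq R :=
  foldr sumset [:: 0] [seq Zset E F j | j : 'I_s <- enum 'I_s & (r < j)%N].

Definition seqmax (S : seq R) : R := foldr Num.max (head 0 S) S.

Definition term (E F : 'I_s -> R) (k : {ffun 'I_s -> nat}) : R :=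
  \prod_(j < s) (((k j).+1%:R) `^ (E j) *
                 ((\sum_(i < s | (i <= j)%N) k i).+1%:R) `^ (F j)).

End Defs.

From HB Require Import structures.
From mathcomp Require Import all_boot all_order all_algebra.
From mathcomp Require Import all_classical all_reals all_analysis.
From mathcomp Require Import ring lra zify.
Import Order.TTheory GRing.Theory Num.Theory.
Local Open Scope ring_scope.

(* Write M_j = max Z_j = max (F_j, E_j + F_j + 1) and
   K_r = k_1 + ... + k_r.  Going down from r = s, the factors of the general term
   with index j >= r are bounded by (K_{r-1} + 1)^c * prod_{j >= r} (k_j + 1)^{a_j},
   with every a_j < -1, for each c > M_r + ... + M_s.  The induction step rests on
   (x + y - 1)^G <= x^c y^d for x, y >= 1, applied with x = K_{r-1} + 1, y = k_r + 1,
   G = F_r + c'; the exponent d can be chosen with E_r + d < -1 precisely because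
   E_r + F_r + 1 + c' < 0, which the hypothesis at r allows.  At r = 1 the general term
   is dominated by a product of terms of the convergent series sum_k (k + 1)^{a_j},
   whose partial sums are bounded by grouping them into dyadic blocks. *)

Section powR_estimates.
Context {R : realType}.
Implicit Types a c d x y E G : R.

Lemma le0_ger_powR c x y : c <= 0 -> 0 < x -> x <= y -> y `^ c <= x `^ c.
Proof.
move=> c0 x0 xy; have y0 : 0 < y := lt_le_trans x0 xy.
by rewrite /powR !gt_eqF // ler_expR ler_wnM2l // ler_ln ?posrE.
Qed.

Lemma powR_addB1_split E G c : E + G + 1 < 0 -> Num.max G (E + G + 1) < c ->
  exists2 d, E + d < -1 &
    forall x y, 1 <= x -> 1 <= y -> (x + y - 1) `^ G <= x `^ c * y `^ d.
Proof.
rewrite gt_max => hEG /andP[hGc hEGc].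
have [G0|G0] := lerP 0 G.
  exists G; first lra.
  move=> x y x1 y1; apply: (@le_trans _ _ ((x * y) `^ G)).
    by apply: ge0_ler_powR; rewrite ?nnegrE; nra.
  rewrite powRM; try lra.
  by apply: ler_wpM2r; [exact: powR_ge0|apply: ler_powR => //; exact: ltW].
(* For G < 0 split G = (G - d) + d with both parts nonpositive. *)
set d := Num.max G (G - c).
have [dG dGc] : G <= d /\ G - c <= d by rewrite !le_max !lexx orbT.
have d0 : d <= 0 by rewrite ge_max; apply/andP; split; lra.
exists d.
  suff : d < -1 - E by lra.
  by rewrite gt_max; apply/andP; split; lra.
move=> x y x1 y1.
rewrite -[G](subrK d) powRD; last by apply/implyP => _; apply/eqP; lra.
apply: ler_pM; rewrite ?powR_ge0 //.
  apply: (@le_trans _ _ (x `^ (G - d))); first by apply: le0_ger_powR; lra.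
  by apply: ler_powR; lra.
by apply: le0_ger_powR; lra.
Qed.

Lemma sum_powR_dyadic_block a m : a <= 0 ->
  \sum_(2 ^ m <= n < 2 ^ m.+1) n%:R `^ a <= (2 `^ (1 + a)) ^+ m.
Proof.
move=> a0; apply: (@le_trans _ _ (\sum_(2 ^ m <= n < 2 ^ m.+1) (2 ^ m)%:R `^ a)).
  apply: ler_sum_nat => n /andP[mn _].
  by apply: le0_ger_powR; rewrite ?ltr0n ?expn_gt0 ?ler_nat.
rewrite sumr_const_nat.
have -> : (2 ^ m.+1 - 2 ^ m = 2 ^ m)%N by rewrite expnS; lia.
have pow2m : ((2 ^ m)%:R : R) = 2 `^ m%:R by rewrite natrX powR_mulrn.
rewrite pow2m -(mulr_natr ((2 `^ m%:R) `^ a)) pow2m -powR_mulrn ?powR_ge0 //.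
rewrite -!powRrM -powRD ?pnatr_eq0 ?implybT //.
by rewrite mulrDl mul1r addrC mulrC.
Qed.

Lemma sum_powR_dyadic a m : a <= 0 ->
  \sum_(1 <= n < 2 ^ m) n%:R `^ a <= \sum_(i < m) (2 `^ (1 + a)) ^+ i.
Proof.
move=> a0; elim: m => [|m IH]; first by rewrite big_geq // big_ord0.
rewrite big_ord_recr /= (big_cat_nat _ (n := 2 ^ m)) ?expn_gt0 ?leq_exp2l //=.
apply: lerD IH _; exact: sum_powR_dyadic_block.
Qed.

Lemma sum_powR_le a N : a < -1 ->
  \sum_(n < N) n.+1%:R `^ a <= (1 - 2 `^ (1 + a))^-1.
Proof.
move=> a1; set q := 2 `^ (1 + a).
have q0 : 0 < q by rewrite powR_gt0.
have q1 : q < 1.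
  by rewrite /q /powR pnatr_eq0 /= expR_lt1 nmulr_rlt0 ?ln_gt0 ?ltr1n //; lra.
apply: (@le_trans _ _ (\sum_(1 <= n < 2 ^ N) n%:R `^ a)).
  have -> : \sum_(n < N) n.+1%:R `^ a = \sum_(1 <= n < N.+1) n%:R `^ a.
    by rewrite big_add1 /= big_mkord.
  have hN : (N.+1 <= 2 ^ N)%N by exact: ltn_expl.
  rewrite [X in _ <= X](big_cat_nat (n := N.+1)) //= lerDl.
  by apply: sumr_ge0 => n _; exact: powR_ge0.
have a0 : a <= 0 by lra.
apply: (le_trans (sum_powR_dyadic a N a0)).
have -> : \sum_(i < N) q ^+ i = series (geometric 1 q) N.
  by rewrite /series /= big_mkord; apply: eq_bigr => i _; rewrite mul1r.
by rewrite -[X in _ <= X]mul1r geometric_le_lim ?ger0_norm ?ltW.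
Qed.

End powR_estimates.

Section sums_of_products.
Context {R : realType}.

Lemma sum_prod_ffun_le {I : finType} (f : I -> nat -> R) (C : I -> R) :
    (forall i n, 0 <= f i n) -> (forall i N, \sum_(n < N) f i n <= C i) ->
  forall l : seq {ffun I -> nat}, uniq l ->
  \sum_(k <- l) \prod_i f i (k i) <= \prod_i C i.
Proof.
move=> f0 fC l ul.
pose M := (\max_(k <- l) \max_i k i)%N.
pose cut (k : {ffun I -> nat}) : {ffun I -> 'I_M.+1} := [ffun i => inord (k i)].
have cutK k i : k \in l -> cut k i = k i :> nat.
  move=> kl; rewrite ffunE inordK // ltnS.
  apply: (leq_trans (leq_bigmax i)); exact: (leq_bigmax_seq _ kl).
pose g (h : {ffun I -> 'I_M.+1}) := \prod_i f i (h i).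
have -> : \sum_(k <- l) \prod_i f i (k i) = \sum_(h <- map cut l) g h.
  by rewrite big_map; apply: eq_big_seq => k kl; apply: eq_bigr => i _; rewrite cutK.
have g0 h : 0 <= g h by apply: prodr_ge0 => i _.
apply: (@le_trans _ _ (\sum_h g h)).
  have ucut : uniq (map cut l).
    rewrite map_inj_in_uniq // => k k' kl k'l e; apply/ffunP => i.
    by rewrite -(cutK k i kl) -(cutK k' i k'l) e.
  rewrite big_uniq // [X in _ <= X](bigID (mem (map cut l))) /= lerDl.
  exact: sumr_ge0.
rewrite /g -(bigA_distr_bigA (fun i (n : 'I_M.+1) => f i n)) /=.
apply: ler_prod => i _; apply/andP; split; last exact: fC.
exact: sumr_ge0.
Qed.

Lemma esum_lty_of_bounded_sums {T : choiceType} (g : T -> R) (C : R) :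
    (forall l : seq T, uniq l -> \sum_(x <- l) g x <= C) ->
  (\esum_(x in [set: T]) (g x)%:E < +oo)%E.
Proof.
move=> gC; apply: (@le_lt_trans _ _ C%:E); last exact: ltry.
apply: ge_ereal_sup => _ [X [finX _] <-].
by rewrite fsbig_finite //= sumEFin lee_fin gC // finmap.fset_uniq.
Qed.

End sums_of_products.

Section max_of_sumsets.
Context {R : realType}.

Lemma seqmax_ge (S : seq R) x : x \in S -> x <= seqmax S.
Proof.
move=> xS; rewrite /seqmax.
have -> : foldr Num.max (head 0 S) S = \big[Num.max/head 0 S]_(y <- S) y.
  by rewrite unlock.
exact: le_bigmax_seq.
Qed.

Lemma sum_mem_foldr_sumset {I : Type} (L : seq I) (Z : I -> seq R) (z : I -> R) :
  (forall i, z i \in Z i) -> \sum_(i <- L) z i \in foldr (@sumset R) [:: 0] (map Z L).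
Proof.
move=> zZ; elim: L => [|i L IH]; first by rewrite big_nil inE.
by rewrite big_cons; apply: allpairs_f.
Qed.

End max_of_sumsets.

Lemma big_ord_ge_split (T : Type) (idx : T) (op : Monoid.com_law idx) n
    (r : 'I_n) (f : 'I_n -> T) :
  \big[op/idx]_(j < n | (r <= j)%N) f j =
    op (f r) (\big[op/idx]_(j < n | (r < j)%N) f j).
Proof.
rewrite (bigD1 r) //=; congr (op _ _); apply: eq_bigl => j.
by rewrite -val_eqE /=; case: ltngtP.
Qed.

Section tail_estimate.
Context {R : realType} {s : nat} (E F : 'I_s -> R).

Definition zmax (j : 'I_s) : R := Num.max (F j) (E j + F j + 1).

Definition zmax_tail (r : nat) : R := \sum_(j < s | (r <= j)%N) zmax j.

Lemma zmax_tail_le_seqmax (r : 'I_s) : zmax_tail r.+1 <= seqmax (Zsum E F r).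
Proof.
apply: seqmax_ge.
have zmaxZ j : zmax j \in Zset E F j.
  by rewrite /zmax /Zset !inE; case: leP => _; rewrite eqxx ?orbT.
have := sum_mem_foldr_sumset [seq j : 'I_s <- enum 'I_s | (r < j)%N] _ _ zmaxZ.
by rewrite big_filter big_enum_cond.
Qed.

Definition prefix_sum (k : {ffun 'I_s -> nat}) (r : nat) : nat :=
  \sum_(i < s | (i < r)%N) k i.

Definition tail_term (r : nat) (k : {ffun 'I_s -> nat}) : R :=
  \prod_(j < s | (r <= j)%N) ((k j).+1%:R `^ E j * (prefix_sum k j.+1).+1%:R `^ F j).

Definition tail_dominated (r : nat) (c : R) : Prop :=
  exists2 a : 'I_s -> R, (forall j : 'I_s, (r <= j)%N -> a j < -1) &
    forall k, tail_term r k <=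
      (prefix_sum k r).+1%:R `^ c * \prod_(j < s | (r <= j)%N) (k j).+1%:R `^ a j.

Lemma prefix_sumS k (r : 'I_s) : prefix_sum k r.+1 = (prefix_sum k r + k r)%N.
Proof.
rewrite /prefix_sum (bigD1 r) //= addnC; congr (_ + _)%N; apply: eq_bigl => j.
by rewrite -val_eqE /= ltnS; case: ltngtP.
Qed.

Lemma tail_termE k (r : 'I_s) : tail_term r k =
  (k r).+1%:R `^ E r * (prefix_sum k r.+1).+1%:R `^ F r * tail_term r.+1 k.
Proof. exact: big_ord_ge_split. Qed.

Lemma tail_dominated_end c : 0 <= c -> tail_dominated s c.
Proof.
move=> c0; have sj (j : 'I_s) : (s <= j)%N = false by rewrite leqNgt ltn_ord.
exists (fun=> -2) => [j|k]; first by rewrite sj.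
rewrite /tail_term !big_pred0 // mulr1 -[X in X <= _](powRr0 (prefix_sum k s).+1%:R).
by apply: ler_powR; rewrite ?ler1n.
Qed.

Lemma tail_dominated_step (r : 'I_s) (c' c : R) :
    E r + F r + c' + 1 < 0 -> c' + zmax r < c ->
  tail_dominated r.+1 c' -> tail_dominated r c.
Proof.
move=> neg_r c'c [a' a'_lt dom'].
have [d Ed split_G] : exists2 d, E r + d < -1 & forall x y, 1 <= x -> 1 <= y ->
    (x + y - 1) `^ (F r + c') <= x `^ c * y `^ d.
  apply: powR_addB1_split; first lra.
  have : F r <= zmax r /\ E r + F r + 1 <= zmax r by rewrite !le_max !lexx orbT.
  by rewrite gt_max; case=> *; apply/andP; split; lra.
exists (fun j => if j == r then E r + d else a' j).
  move=> j rj; case: eqP => [//|/eqP jr]; apply: a'_lt.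
  by rewrite ltn_neqAle rj andbT eq_sym val_eqE.
move=> k; rewrite tail_termE big_ord_ge_split /= eqxx.
have -> : \prod_(j < s | (r < j)%N)
    (k j).+1%:R `^ (if j == r then E r + d else a' j) =
    \prod_(j < s | (r < j)%N) (k j).+1%:R `^ a' j.
  by apply: eq_bigr => j rj; rewrite -val_eqE /= gtn_eqF.
set P := \prod_(j < s | (r < j)%N) _.
set X := (prefix_sum k r).+1%:R; set Y := (k r).+1%:R.
have X1 : 1 <= X by rewrite ler1n.
have Y1 : 1 <= Y by rewrite ler1n.
have XY : (prefix_sum k r.+1).+1%:R = X + Y - 1.
  by rewrite prefix_sumS /X /Y -!natr1 natrD; ring.
have [Y0 XY0] : Y != 0 /\ X + Y - 1 != 0 by rewrite !gt_eqF //; lra.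
rewrite powRD ?Y0 ?implybT //.
have -> : X `^ c * (Y `^ E r * Y `^ d * P) = Y `^ E r * (X `^ c * Y `^ d) * P by ring.
apply: (@le_trans _ _ (Y `^ E r * (X + Y - 1) `^ F r * ((X + Y - 1) `^ c' * P))).
  by rewrite -XY; apply: ler_wpM2l; rewrite ?mulr_ge0 ?powR_ge0.
rewrite mulrA -(mulrA _ (_ `^ F r)) -powRD ?XY0 ?implybT //.
apply: ler_wpM2r; first by apply: prodr_ge0 => j _; exact: powR_ge0.
by apply: ler_wpM2l; [exact: powR_ge0|exact: split_G].
Qed.

Section dominated_tails.
Hypothesis zmax_tail_lt : forall r : 'I_s, E r + F r + 1 + zmax_tail r.+1 < 0.

Lemma tail_dominated_from r c : (r <= s)%N -> zmax_tail r < c -> tail_dominated r c.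
Proof.
move=> /subnKC; move: (s - r)%N => m; elim: m r c => [|m IH] r c.
  rewrite addn0 => -> c_gt; apply: tail_dominated_end; apply/ltW.
  by rewrite /zmax_tail big_pred0 // in c_gt => j; rewrite leqNgt ltn_ord.
move=> rm c_gt; have rs : (r < s)%N by rewrite -rm addnS ltnS leq_addr.
have [rr rrE] : {rr : 'I_s | rr = r :> nat} by exists (Ordinal rs).
rewrite -{}rrE in rm c_gt *.
have split_r : zmax_tail rr = zmax rr + zmax_tail rr.+1 by exact: big_ord_ge_split.
have neg_r := zmax_tail_lt rr.
pose mu : R := Num.min (c - zmax rr) (- (E rr + F rr + 1)).
have [mu1 mu2] : mu <= c - zmax rr /\ mu <= - (E rr + F rr + 1).
  by rewrite !ge_min !lexx orbT.
have mu_gt : zmax_tail rr.+1 < mu by rewrite lt_min; apply/andP; split; lra.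
pose c' : R := (zmax_tail rr.+1 + mu) / 2.
apply: (@tail_dominated_step rr c'); rewrite {}/c'; [lra|lra|].
by apply: IH; [rewrite addSnnS | lra].
Qed.

Lemma term_dominated : exists2 a : 'I_s -> R, (forall j, a j < -1) &
  forall k, term E F k <= \prod_j (k j).+1%:R `^ a j.
Proof.
have [|a a_lt dom] := @tail_dominated_from 0 (zmax_tail 0 + 1) (leq0n s); first lra.
exists a => [j|k]; first exact: a_lt.
have := dom k; have -> : prefix_sum k 0 = 0%N by exact: big_pred0.
rewrite mulr1n powR1 mul1r.
exact: le_trans.
Qed.

End dominated_tails.

End tail_estimate.

Theorem lemma3p4 (R : realType) (s : nat) (hs : (0 < s)%N) (E F : 'I_s -> R)
  (hyp : forall r : 'I_s, E r + F r + 1 + seqmax (Zsum E F r) < 0) :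
  (\esum_(k in [set: {ffun 'I_s -> nat}]) (term E F k)%:E < +oo)%E.
Proof.
have zmax_tail_lt (r : 'I_s) : E r + F r + 1 + zmax_tail E F r.+1 < 0.
  by have := hyp r; have := zmax_tail_le_seqmax E F r; lra.
have [a a_lt dom] := term_dominated E F zmax_tail_lt.
apply: (esum_lty_of_bounded_sums _ (\prod_j (1 - 2 `^ (1 + a j))^-1)) => l ul.
apply: (@le_trans _ _ (\sum_(k <- l) \prod_j (k j).+1%:R `^ a j)).
  by apply: ler_sum => k _; exact: dom.
apply: (sum_prod_ffun_le (fun j n => n.+1%:R `^ a j)) ul => [j n|j N].
- exact: powR_ge0.
- exact: sum_powR_le.
Qed.
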